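(* Suppose the registers $R_1[j]$, $R_2[j]$, $C_1[j]$ ($j\ge 0$) of the Weakener algorithm (described in the context) are strongly linearizable, and the algorithm is run against a strong adversary. Then for every round $j \ge 0$, with probability at least $1/2$, no process enters round $j+1$.
   Context: Model: an asynchronous shared-memory system of $n\ge 3$ processes $p_0,\dots,p_{n-1}$ that may fail by crashing. A strong adversary is a scheduler that sees the entire history so far, including the results of all coin flips made so far, and chooses adaptively which process takes the next step. A ''strongly linearizable register'' means an implemented register whose implementation is strongly linearizable. Strong linearizability: a set of histories $\mathcal{H}$ is strongly linearizable if there is a function $f$ from the prefix-closure of $\mathcal{H}$ to sequential histories such that (L) for every $H$ in the prefix-closure, $f(H)$ is a linearization of $H$ (a sequential history consistent with the real-time order of non-overlapping operations of $H$ and with the objects' sequential specifications), and (P) whenever $G$ is a prefix of $H$ (both in the prefix-closure), $f(G)$ is a prefix of $f(H)$. Weakener algorithm. Shared registers, for each $j = 0,1,2,\dots$: $R_1[j]$, a multi-writer multi-reader register initialized to $\bot$; $C_1[j]$, a register written only by $p_0$, initialized to $-1$; $R_2[j]$, a register initialized to $\textsc{false}$. Code of $p_i$ for $i \in \{0,1\}$: for rounds $j=0,1,2,\dots$: (Phase 1) write $i$ into $R_1[j]$; if $i=0$, flip a fair coin (outcome in $\{0,1\}$) and write the outcome into $C_1[j]$; (Phase 2) read $R_2[j]$ into local variable $v_1$; if $v_1 = \textsc{false}$, exit the for loop. After the loop: return. Code of $p_i$ for $i \in \{2,\dots,n-1\}$: for rounds $j=0,1,2,\dots$: (Phase 1)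 read $R_1[j]$ into $u_1$; read $R_1[j]$ into $u_2$; read $C_1[j]$ into $c_1$; if $u_1 \ne c_1$ or $u_2 \ne 1-c_1$, exit the for loop; (Phase 2) write $\textsc{true}$ into $R_2[j]$. After the loop: return. *)

From mathcomp Require Import all_boot all_algebra.
Require Stdlib.Lists.List.
Set Implicit Arguments. Unset Strict Implicit. Unset Printing Implicit Defensive.
Import GRing.Theory Num.Theory.

Inductive value := VBot | VInt of int | VBool of bool | VAck.

Inductive reg := R1 of nat | C1 of nat | R2 of nat.

Definition reg_eqb (r r' : reg) : bool :=
  match r, r' with
  | R1 a, R1 b => a == b
  | C1 a, C1 b => a == b
  | R2 a, R2 b => a == b
  | _, _ => false
  end.

Definition init (r : reg) : value :=
  match r with
  | R1 _ => VBot
  | C1 _ => VInt (-1)%R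
  | R2 _ => VBool false
  end.

Inductive op := Read of reg | Write of reg & value.

Definition op_reg (o : op) : reg :=
  match o with Read x => x | Write x _ => x end.

Inductive action := Invoke of op | Flip | Done.

(* A program maps the local trace (the results of the process' previous
   steps: responses of its operations and coin outcomes, in order) to the
   pair (current round, next action). *)

Fixpoint prog01 (i j : nat) (tr : seq value) : nat * action :=
  match tr with
  | [::] => (j, Invoke (Write (R1 j) (VInt (Posz i))))
  | _ :: tr1 =>
    if i == 0 then
      match tr1 with
      | [::] => (j, Flip)
      | c :: tr2 =>
        match tr2 with
        | [::] => (j, Invoke (Write (C1 j) c))
        | _ :: tr3 =>
          match tr3 with
          | [::] => (j, Invoke (Read (R2 j)))
          | v :: tr4 => if v is VBool false then (j, Done) else prog01 i j.+1 tr4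
          end
        end
      end
    else
      match tr1 with
      | [::] => (j, Invoke (Read (R2 j)))
      | v :: tr2 => if v is VBool false then (j, Done) else prog01 i j.+1 tr2
      end
  end.

Definition check (u1 u2 c1 : value) : bool :=
  match u1, u2, c1 with
  | VInt a, VInt b, VInt c => (a == c) && (b == (1 - c)%R)
  | _, _, _ => false
  end.

Fixpoint prog2 (j : nat) (tr : seq value) : nat * action :=
  match tr with
  | [::] => (j, Invoke (Read (R1 j)))
  | u1 :: tr1 =>
    match tr1 with
    | [::] => (j, Invoke (Read (R1 j)))
    | u2 :: tr2 =>
      match tr2 with
      | [::] => (j, Invoke (Read (C1 j)))
      | c1 :: tr3 =>
        if check u1 u2 c1 then
          match tr3 with
          | [::] => (j, Invoke (Write (R2 j) (VBool true)))
          | _ :: tr4 => prog2 j.+1 tr4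
          end
        else (j, Done)
      end
    end
  end.

Definition prog (p : nat) (tr : seq value) : nat * action :=
  if p < 2 then prog01 p 0 tr else prog2 0 tr.

Inductive event := EInv of nat & op | EResp of nat & value | EFlip of nat & bool.

Definition ev_result (p : nat) (e : event) : option value :=
  match e with
  | EResp q v => if q == p then Some v else None
  | EFlip q b => if q == p then Some (VInt (Posz (nat_of_bool b))) else None
  | EInv _ _ => None
  end.

Definition ltrace (p : nat) (E : seq event) : seq value := pmap (ev_result p) E.

Definition upd_pending (p : nat) (st : option op) (e : event) : option op :=
  match e with
  | EInv q o => if q == p then Some o else st
  | EResp q _ => if q == p then None else st
  | EFlip _ _ => st
  end.

Definition pending (p : nat) (E : seq event) : option op :=
  foldl (upd_pending p) None E.

(* Choices of the adversary at each step: let process p take its next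
   step (of its code), let the (implementation of the) pending operation
   of p respond with a value, or do nothing. *)
Inductive choice := CStep of nat | CResp of nat & value | CIdle.

(* A strong adversary sees the whole execution so far, including all coin
   outcomes. *)
Definition strategy := seq event -> choice.

Definition next_event (n : nat) (A : strategy) (E : seq event) (b : bool)
  : option event :=
  match A E with
  | CStep p =>
    if p < n then
      if pending p E is None then
        match (prog p (ltrace p E)).2 with
        | Invoke o => Some (EInv p o)
        | Flip => Some (EFlip p b)
        | Done => None
        end
      else None
    else None
  | CResp p v =>
    if p < n then (if pending p E is Some _ then Some (EResp p v) else None)
    else None
  | CIdle => None
  end.

Definition is_flip (e : event) : bool := if e is EFlip _ _ then true else false.

Fixpoint run (n : nat) (A : strategy) (cs : seq bool) (k : nat) : seq event :=
  match k with
  | 0 => [::]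
  | k'.+1 =>
    let E := run n A cs k' in
    if next_event n A E (nth false cs (count is_flip E)) is Some e
    then rcons E e else E
  end.

Definition is_exec (n : nat) (A : strategy) (E : seq event) : Prop :=
  exists (cs : seq bool) (k : nat), E = run n A cs k.

(* An operation of E is identified by the position of its invocation. *)
Definition inv_at (E : seq event) (i : nat) : option (nat * op) :=
  match onth E i with
  | Some (EInv p o) => Some (p, o)
  | _ => None
  end.

Definition is_resp_of (p : nat) (e : event) : bool :=
  if e is EResp q _ then q == p else false.

Definition resp_of (E : seq event) (i : nat) : option (nat * value) :=
  match inv_at E i with
  | Some (p, _) =>
    let s := drop i.+1 E in
    let k := find (is_resp_of p) s in
    match onth s k with
    | Some (EResp _ v) => Some (i.+1 + k, v)
    | _ => None
    end
  | None => None
  end.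

Definition upd (mem : reg -> value) (x : reg) (v : value) : reg -> value :=
  fun y => if reg_eqb y x then v else mem y.

Fixpoint legal_from (E : seq event) (mem : reg -> value)
    (S : seq (nat * value)) : Prop :=
  match S with
  | [::] => True
  | (i, r) :: S' =>
    match inv_at E i with
    | Some (_, Read x) => r = mem x /\ legal_from E mem S'
    | Some (_, Write x v) => r = VAck /\ legal_from E (upd mem x v) S'
    | None => False
    end
  end.

Definition linearization_on (x : reg) (E : seq event) (S : seq (nat * value))
  : Prop :=
  [/\ uniq (map fst S),
      (forall i r, List.In (i, r) S ->
         exists p o, inv_at E i = Some (p, o) /\ op_reg o = x),
      (forall i p o k v, inv_at E i = Some (p, o) -> op_reg o = x ->
         resp_of E i = Some (k, v) -> List.In (i, v) S),
      (forall a b, a < b -> b < size S ->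
         ~ (exists k v, resp_of E (nth (0, VBot) S b).1 = Some (k, v)
                        /\ k < (nth (0, VBot) S a).1))
    & legal_from E init S].

Definition registers_strongly_linearizable (n : nat) (A : strategy) : Prop :=
  forall x : reg, exists f : seq event -> seq (nat * value),
    (forall E, is_exec n A E -> linearization_on x E (f E)) /\
    (forall G H, is_exec n A G -> is_exec n A H ->
       (exists s, H = G ++ s) -> exists s', f H = f G ++ s').

Definition entered (n : nat) (E : seq event) (r : nat) : bool :=
  [exists p : 'I_n, r <= (prog p (ltrace p E)).1].

(* At most k coins are
   flipped in k steps, so uniform k-bit strings give the exact law. *)
Definition prob_none_within (n : nat) (A : strategy) (j k : nat) : rat :=
  (#|[pred cs : k.-tuple bool | ~~ entered n (run n A cs k) j.+1]|)%:R
  / (2 ^ k)%:R.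

(* If some process enters round j+1, some p_i with i >= 2 has written R_2[j]:
   it read two different values u_1, u_2 from R_1[j] and then u_1 from C_1[j].
   As only p_0 (writing 0) and p_1 (writing 1) write R_1[j], u_1 is the first
   write in the linearization of R_1[j], and as only p_0 writes C_1[j], u_1 is
   the outcome of p_0's round-j coin. But p_0 completes its write to R_1[j]
   before flipping, so by strong linearizability the first write is already
   fixed in the linearization of the prefix ending just before the flip.
   Toggling that coin keeps the prefix and changes the outcome, so afterwards
   nobody enters round j+1. Toggling is an involution on coin sequences mapping
   the bad ones into the good ones, hence the good ones are at least half. *)

From mathcomp Require Import all_boot all_algebra.
Import GRing.Theory Num.Theory.
From mathcomp Require Import zify lra.
Set Implicit Arguments. Unset Strict Implicit. Unset Printing Implicit Defensive.

Definition ev0 := EFlip 0 false.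

Definition ev_proc (e : event) : nat :=
  match e with EInv q _ => q | EResp q _ => q | EFlip q _ => q end.

Section Runs.

Variables (n : nat) (A : strategy).

Definition consistent_with (cs : seq bool) (E : seq event) :=
  forall i, i < size E ->
    next_event n A (take i E) (nth false cs (count is_flip (take i E)))
    = Some (nth ev0 E i).

Definition valid (E : seq event) :=
  forall i, i < size E -> exists b, next_event n A (take i E) b = Some (nth ev0 E i).

Lemma runS cs t : run n A cs t.+1 =
  let E := run n A cs t in
  if next_event n A E (nth false cs (count is_flip E)) is Some e
  then rcons E e else E.
Proof. by []. Qed.

Lemma run_consistent cs t : consistent_with cs (run n A cs t).
Proof.
elim: t => [|t IH] i //=.
case H: next_event => [e|]; last exact: IH.
rewrite size_rcons ltnS leq_eqVlt => /orP [/eqP ->|lt].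
  by rewrite -cats1 take_size_cat // nth_cat ltnn subnn.
by rewrite -cats1 takel_cat ?nth_cat ?lt ?(ltnW lt) // IH.
Qed.

Lemma consistent_valid cs E : consistent_with cs E -> valid E.
Proof. by move=> H i lt; eexists; apply: H. Qed.

Lemma valid_run cs t : valid (run n A cs t).
Proof. exact/consistent_valid/run_consistent. Qed.

Lemma run_prefix cs t t' : t <= t' -> exists s, run n A cs t' = run n A cs t ++ s.
Proof.
elim: t' => [|t' IH]; first by rewrite leqn0 => /eqP ->; exists [::]; rewrite cats0.
rewrite leq_eqVlt => /orP [/eqP ->|]; first by exists [::]; rewrite cats0.
rewrite ltnS => /IH [s Hs]; rewrite runS /=.
case: next_event => [e|]; last by exists s.
by exists (rcons s e); rewrite Hs rcons_cat.
Qed.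

Lemma take_run cs t i : i <= size (run n A cs t) ->
  exists2 t', t' <= t & run n A cs t' = take i (run n A cs t).
Proof.
elim: t i => [|t IH] i /=; first by exists 0 => //; case: i.
case H: next_event => [e|]; last by case/IH => t' le Ht; exists t'; first exact: leqW.
rewrite size_rcons leq_eqVlt => /orP [/eqP Hi|].
  by exists t.+1; rewrite ?Hi ?take_oversize ?size_rcons // runS /= H.
rewrite ltnS => /[dup] le /IH [t' le' Ht']; rewrite -cats1 takel_cat //.
by exists t'; first exact: leqW.
Qed.

Lemma size_run cs t : size (run n A cs t) <= t.
Proof.
elim: t => [//|t IH]; rewrite runS /=.
by case: next_event => [e|]; rewrite ?size_rcons // leqW.
Qed.

Lemma exec_valid E : is_exec n A E -> valid E.
Proof. by case=> cs [t ->]; apply: valid_run. Qed.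

Lemma exec_take E r : is_exec n A E -> is_exec n A (take r E).
Proof.
case=> cs [t ->]; case: (leqP r (size (run n A cs t))) => [/take_run [t' _ <-]|lt].
  by exists cs, t'.
by rewrite take_oversize ?(ltnW lt) //; exists cs, t.
Qed.

Lemma next_event_coin E :
  (forall b b', next_event n A E b = next_event n A E b') \/
  (exists p, forall b, next_event n A E b = Some (EFlip p b)).
Proof.
rewrite /next_event; case: (A E) => [p|p v|]; try by left.
case: (p < n); last by left.
case: pending => [o|]; first by left.
by case: (prog p (ltrace p E)).2 => [o| |]; [left | right; exists p | left].
Qed.

Lemma count_flip_runS cs t :
  count is_flip (run n A cs t) <= count is_flip (run n A cs t.+1).
Proof. by rewrite runS /=; case: next_event => // e; rewrite -cats1 count_cat leq_addr. Qed.

Lemma run_eq_coins cs cs' t :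
  (forall i, i < count is_flip (run n A cs t) -> nth false cs i = nth false cs' i) ->
  run n A cs t = run n A cs' t.
Proof.
elim: t => [//|t IH] H.
have IH' := IH (fun i lt => H i (leq_trans lt (count_flip_runS _ _))).
rewrite !runS /= -IH'.
case: (next_event_coin (run n A cs t)) => [Hb|[p Hp]].
  by rewrite (Hb _ (nth false cs' (count is_flip (run n A cs t)))).
rewrite !Hp; congr (rcons _ (EFlip _ _)); apply: H.
by rewrite runS /= Hp -cats1 count_cat /= addn1.
Qed.

End Runs.

Lemma ltrace_cat p E s : ltrace p (E ++ s) = ltrace p E ++ ltrace p s.
Proof. exact: pmap_cat. Qed.

Lemma ltrace_rcons p E e : ltrace p (rcons E e) =
  ltrace p E ++ (if ev_result p e is Some v then [:: v] else [::]).
Proof. by rewrite -cats1 ltrace_cat /ltrace /=; case: ev_result. Qed.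

Lemma ltrace_other p s : all (fun e => ev_proc e != p) s -> ltrace p s = [::].
Proof.
elim: s => //= e s IH /andP [ne /IH]; rewrite /ltrace /= => ->.
by case: e ne => q x /= ne; rewrite ?(negbTE ne).
Qed.

Lemma ltrace_take p E i :
  ltrace p (take i E) = take (size (ltrace p (take i E))) (ltrace p E).
Proof. by rewrite -{3}(cat_take_drop i E) ltrace_cat take_size_cat. Qed.

Lemma size_ltrace_take p E i i' : i <= i' ->
  size (ltrace p (take i E)) <= size (ltrace p (take i' E)).
Proof.
move=> le; rewrite -(take_takel E le) -{2}(cat_take_drop i (take i' E)).
by rewrite ltrace_cat size_cat leq_addr.
Qed.

Lemma pending_rcons p E e : pending p (rcons E e) = upd_pending p (pending p E) e.
Proof. exact: foldl_rcons. Qed.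

Lemma inv_at_size E i p o : inv_at E i = Some (p, o) -> i < size E.
Proof. by rewrite /inv_at; case: ltnP => // le; rewrite onth_default. Qed.

Lemma inv_at_nth E i p o : inv_at E i = Some (p, o) -> nth ev0 E i = EInv p o.
Proof.
move=> H; move: H (inv_at_size H); rewrite /inv_at => + lt.
by rewrite onthE (nth_map ev0 _ _ lt); case: nth => // q o' [-> ->].
Qed.

Lemma nth_inv_at E i p o : i < size E -> nth ev0 E i = EInv p o -> inv_at E i = Some (p, o).
Proof. by move=> lt Hi; rewrite /inv_at onthE (nth_map ev0 _ _ lt) Hi. Qed.

Lemma inv_at_cat E s i : i < size E -> inv_at (E ++ s) i = inv_at E i.
Proof. by move=> lt; rewrite /inv_at onth_cat lt. Qed.

Section ValidExecutions.

Variables (n : nat) (A : strategy).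
Local Notation valid := (valid n A).

Lemma valid_take E i : valid E -> valid (take i E).
Proof.
move=> H k; rewrite size_take; case: (ltnP i (size E)) => [ltiE lt|leEi lt].
  by rewrite take_takel ?(ltnW lt) // nth_take //; apply: H; apply: ltn_trans ltiE.
by rewrite (take_oversize leEi); apply: H.
Qed.

Lemma valid_rcons E e :
  valid (rcons E e) -> valid E /\ exists b, next_event n A E b = Some e.
Proof.
move=> H; split; first by have := valid_take (i := size E) H; rewrite -cats1 take_size_cat.
have := H (size E); rewrite size_rcons ltnSn -cats1 take_size_cat //.
by rewrite nth_cat ltnn subnn; apply.
Qed.

Lemma next_event_spec E b e : next_event n A E b = Some e ->
  match e with
  | EInv p o => [/\ p < n, pending p E = None & (prog p (ltrace p E)).2 = Invoke o]
  | EFlip p b' => [/\ p < n, pending p E = None, (prog p (ltrace p E)).2 = Flip & b' = b]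
  | EResp p v => p < n /\ exists o, pending p E = Some o
  end.
Proof.
rewrite /next_event; case: (A E) => [p|p v|] //; case: ltnP => // lt.
  by case Hp: pending => [o|] //; case Ha: (prog p (ltrace p E)).2 => [o| |] // [<-].
by case Hp: pending => [o|] // [<-]; split => //; exists o.
Qed.

Lemma valid_inv E i p o : valid E -> inv_at E i = Some (p, o) ->
  [/\ p < n, pending p (take i E) = None & (prog p (ltrace p (take i E))).2 = Invoke o].
Proof.
move=> VE H; have [b Hb] := VE i (inv_at_size H).
by have := next_event_spec Hb; rewrite (inv_at_nth H).
Qed.

Lemma pending_invoked E p o : valid E -> pending p E = Some o ->
  (prog p (ltrace p E)).2 = Invoke o.
Proof.
elim/last_ind: E o => [//|E e IH] o /valid_rcons [VE [b /[dup] Hb /next_event_spec]].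
rewrite pending_rcons ltrace_rcons.
case: e Hb => [q o'|q v|q b'] Hb /=.
- case=> _ Hq Ha; case: eqP => [? [<-]|_]; first by subst; rewrite cats0.
  by rewrite cats0; apply: IH.
- by move=> _; case: eqP => // _; rewrite cats0; apply: IH.
- case=> _ Hq _ _; case: eqP => [<-|_]; first by rewrite Hq.
  by rewrite cats0; apply: IH.
Qed.

Lemma pending_last_inv E p o : valid E -> pending p E = Some o ->
  exists i, [/\ i < size E, nth ev0 E i = EInv p o
               & all (fun e => ev_proc e != p) (drop i.+1 E)].
Proof.
elim/last_ind: E o => [//|E e IH] o /valid_rcons [VE [b /[dup] Hb /next_event_spec]].
rewrite pending_rcons.
have lift : ev_proc e != p -> pending p E = Some o ->
    exists i, [/\ i < size (rcons E e), nth ev0 (rcons E e) i = EInv p o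
      & all (fun e => ev_proc e != p) (drop i.+1 (rcons E e))].
  move=> ne /(IH _ VE) [i [lt H1 H2]]; exists i; split.
  - by rewrite size_rcons ltnS ltnW.
  - by rewrite -cats1 nth_cat lt.
  rewrite -cats1 drop_cat; case: ltnP => h; first by rewrite all_cat H2 /= ne.
  by rewrite (_ : i.+1 - size E = 0) /= ?ne //; apply/eqP; rewrite subn_eq0.
case: e Hb lift => [q o'|q v|q b'] Hb lift /=.
- move=> _; case: (eqVneq q p) => [-> [<-]|ne]; last exact: lift.
  exists (size E); rewrite size_rcons nth_rcons ltnn eqxx drop_oversize //.
  by rewrite size_rcons.
- by move=> _; case: (eqVneq q p) => // ne; apply: lift.
- case=> _ Hq _ _; case: (eqVneq q p) => [<-|ne]; first by rewrite Hq.
  exact: lift.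
Qed.

End ValidExecutions.

Lemma ltrace_event p E l : l < size (ltrace p E) -> exists r,
  [/\ r < size E, ltrace p (take r E) = take l (ltrace p E)
    & ev_result p (nth ev0 E r) = Some (nth VBot (ltrace p E) l)].
Proof.
elim/last_ind: E => [//|E e IH]; rewrite ltrace_rcons size_cat => lt.
case: (ltnP l (size (ltrace p E))) => [lt'|ge].
  have [r [rlt Hr Hv]] := IH lt'; exists r; split.
  - by rewrite size_rcons ltnS ltnW.
  - by rewrite -cats1 takel_cat ?(ltnW rlt) // Hr takel_cat ?(ltnW lt').
  - by rewrite -cats1 nth_cat rlt Hv nth_cat lt'.
move: lt; case He: (ev_result p e) => [v|] /=; last by rewrite addn0 ltnNge ge.
rewrite addn1 ltnS => le; have -> : l = size (ltrace p E) by apply/eqP; rewrite eqn_leq le ge.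
exists (size E); rewrite size_rcons -cats1 take_size_cat // nth_cat ltnn subnn He.
by rewrite take_size_cat // nth_cat ltnn subnn.
Qed.

Lemma inv_resp E i r p o v : i < r -> r < size E -> nth ev0 E i = EInv p o ->
  all (fun e => ev_proc e != p) (drop i.+1 (take r E)) -> nth ev0 E r = EResp p v ->
  inv_at E i = Some (p, o) /\ resp_of E i = Some (r, v).
Proof.
move=> ir rE Hi Hall Hr.
have HI := nth_inv_at (ltn_trans ir rE) Hi; split => //; rewrite /resp_of HI.
have -> : drop i.+1 E = drop i.+1 (take r E) ++ drop r E.
  rewrite -{1}(cat_take_drop r E) drop_cat size_take rE; case: ltnP => // h.
  have -> : i.+1 = r by apply/eqP; rewrite eqn_leq ir h.
  by rewrite subnn drop0 (@drop_oversize _ r (take r E)) ?size_take ?rE.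
have hs : has (is_resp_of p) (drop i.+1 (take r E)) = false.
  apply/negbTE; rewrite -all_predC; apply: sub_all Hall.
  by case=> //= q _ ne; rewrite ne.
rewrite find_cat hs (drop_nth ev0 rE) Hr /= eqxx addn0 onth_cat ltnn subnn /=.
by rewrite size_drop size_take rE; congr (Some (_, _)); lia.
Qed.

Section ValidTraces.

Variables (n : nat) (A : strategy) (E : seq event).
Hypothesis VE : valid n A E.

Lemma ltrace_op p l o : l < size (ltrace p E) ->
  (prog p (take l (ltrace p E))).2 = Invoke o ->
  exists i r, [/\ i < r, r < size E, inv_at E i = Some (p, o),
     resp_of E i = Some (r, nth VBot (ltrace p E) l)
     & ltrace p (take i E) = take l (ltrace p E) /\
       ltrace p (take r E) = take l (ltrace p E)].
Proof.
move=> lt Ha; have [r [rlt Hr Hv]] := ltrace_event lt.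
have [b /next_event_spec] := VE rlt.
case Her: (nth ev0 E r) Hv => [q o'|q v|q b'] //=; case: eqP => // Hq [<-]; subst q; last first.
  by case=> _ _; rewrite Hr Ha.
case=> _ [o' Hp].
have VEr := valid_take (i := r) VE.
have := pending_invoked VEr Hp; rewrite Hr Ha => -[eo]; subst o'.
have [i [ilt Hi Hall]] := pending_last_inv VEr Hp.
rewrite size_take rlt in ilt; rewrite nth_take // in Hi.
have [HI HR] := inv_resp ilt rlt Hi Hall Her.
exists i, r; split => //.
rewrite -Hr -(cat_take_drop i.+1 (take r E)) ltrace_cat (ltrace_other Hall) cats0.
rewrite take_takel // (take_nth ev0 (leq_trans ilt (ltnW rlt))) ltrace_rcons Hi /=.
by rewrite cats0.
Qed.

Lemma ltrace_op_rcons p T v o : take (size T).+1 (ltrace p E) = rcons T v ->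
  (prog p T).2 = Invoke o ->
  exists i r, [/\ i < r, r < size E, inv_at E i = Some (p, o),
     resp_of E i = Some (r, v) & ltrace p (take i E) = T /\ ltrace p (take r E) = T].
Proof.
move=> HT Ha.
have lt : size T < size (ltrace p E).
  move: (congr1 size HT); rewrite size_take size_rcons.
  by case: ltnP => [h _|h ->]; [exact: ltn_trans (ltnSn _) h | exact: ltnSn].
have Ht : take (size T) (ltrace p E) = T.
  by rewrite -(take_takel _ (leqnSn (size T))) HT -cats1 take_size_cat.
have Hn : nth VBot (ltrace p E) (size T) = v.
  by rewrite -(nth_take VBot (ltnSn (size T))) HT nth_rcons ltnn eqxx.
have [|i [r [h1 h2 h3 HR [h4 h5]]]] := ltrace_op (o := o) lt; first by rewrite Ht.
by exists i, r; split => //; [rewrite -Hn | rewrite h4 h5 Ht].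
Qed.

Lemma ltrace_flip p l : l < size (ltrace p E) ->
  (prog p (take l (ltrace p E))).2 = Flip ->
  exists r b, [/\ r < size E, nth ev0 E r = EFlip p b,
     nth VBot (ltrace p E) l = VInt (Posz b) & ltrace p (take r E) = take l (ltrace p E)].
Proof.
move=> lt Ha; have [r [rlt Hr Hv]] := ltrace_event lt.
have [b /next_event_spec] := VE rlt.
case Her: (nth ev0 E r) Hv => [q o'|q v|q b'] //=; case: eqP => // Hq [<-]; subst q.
  by case=> _ [o' /(pending_invoked (valid_take VE))]; rewrite Hr Ha.
by move=> _; exists r, b'.
Qed.

End ValidTraces.

Definition not_false (x : value) := if x is VBool false then false else true.

Lemma prog0_round j0 x1 x2 x3 x4 t : prog01 0 j0 [:: x1, x2, x3, x4 & t] =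
  if not_false x4 then prog01 0 j0.+1 t else (j0, Done).
Proof. by case: x4 => // -[]. Qed.

Lemma prog1_round i j0 x1 x2 t : i != 0 -> prog01 i j0 [:: x1, x2 & t] =
  if not_false x2 then prog01 i j0.+1 t else (j0, Done).
Proof. by case: i => // i _; case: x2 => // -[]. Qed.

Lemma prog0_flip j0 tr r : prog01 0 j0 tr = (r, Flip) ->
  size tr + 4 * j0 = 4 * r + 1 /\
  exists tr' x, tr = rcons tr' x /\ prog01 0 j0 tr' = (r, Invoke (Write (R1 r) (VInt 0))).
Proof.
have [N] := ubnP (size tr); elim: N tr j0 => // N IH tr j0 Hsz.
case: tr Hsz => [|x1 [|x2 [|x3 [|x4 tr4]]]] Hsz; try by [].
- case=> <-; split; first by simpl; lia.
  by exists [::], x1.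
- rewrite prog0_round; case: ifP => // nx4.
  move/IH => [|Hs [tr' [x [Htr Ht]]]]; first by move: Hsz => /=; lia.
  split; first by simpl; lia.
  by rewrite Htr; exists [:: x1, x2, x3, x4 & tr'], x; rewrite prog0_round nx4.
Qed.

Lemma prog0_writeC1 j0 tr r y w : prog01 0 j0 tr = (r, Invoke (Write (C1 y) w)) ->
  exists tr', tr = rcons tr' w /\ prog01 0 j0 tr' = (y, Flip).
Proof.
have [N] := ubnP (size tr); elim: N tr j0 => // N IH tr j0 Hsz.
case: tr Hsz => [|x1 [|x2 [|x3 [|x4 tr4]]]] Hsz; try by [].
- by case=> _ <- <-; exists [:: x1].
- rewrite prog0_round; case: ifP => // nx4.
  move/IH => [|tr' [Htr Ht]]; first by move: Hsz => /=; lia.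
  by rewrite Htr; exists [:: x1, x2, x3, x4 & tr']; rewrite prog0_round nx4.
Qed.

(* A round of p_0 contributes four entries to its local trace (two write
   acknowledgements, the coin and the value read), a round of p_1 two; so the
   round of a write can be read off the length of the local trace. *)
Lemma prog0_writeR1 j0 tr r y v : prog01 0 j0 tr = (r, Invoke (Write (R1 y) v)) ->
  v = VInt 0 /\ size tr + 4 * j0 = 4 * y.
Proof.
have [N] := ubnP (size tr); elim: N tr j0 => // N IH tr j0 Hsz.
case: tr Hsz => [|x1 [|x2 [|x3 [|x4 tr4]]]] Hsz; try by [].
- by case=> _ <- <-; split => //; rewrite /= muln0.
- rewrite prog0_round; case: ifP => // nx4.
  move/IH => [|-> Hs]; first by move: Hsz => /=; lia.
  by split => //; simpl; lia.
Qed.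

Lemma prog01_no_writeR2 i j0 tr r y v : prog01 i j0 tr <> (r, Invoke (Write (R2 y) v)).
Proof.
case: (eqVneq i 0) => [->|ni]; have [N] := ubnP (size tr); elim: N tr j0 => // N IH tr j0 Hsz.
  case: tr Hsz => [|x1 [|x2 [|x3 [|x4 tr4]]]] Hsz; try by [].
  rewrite prog0_round; case: ifP => // nx4; apply: IH; move: Hsz => /=; lia.
case: tr Hsz => [|x1 [|x2 tr2]] Hsz; try by rewrite /=; case: eqP ni.
rewrite prog1_round //; case: ifP => // nx2; apply: IH; move: Hsz => /=; lia.
Qed.

Lemma prog1_no_writeC1 j0 tr r y v : prog01 1 j0 tr <> (r, Invoke (Write (C1 y) v)).
Proof.
have [N] := ubnP (size tr); elim: N tr j0 => // N IH tr j0 Hsz.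
case: tr Hsz => [|x1 [|x2 tr2]] Hsz //.
rewrite prog1_round //; case: ifP => // nx2; apply: IH; move: Hsz => /=; lia.
Qed.

Lemma prog1_writeR1 j0 tr r y v : prog01 1 j0 tr = (r, Invoke (Write (R1 y) v)) ->
  v = VInt 1 /\ size tr + 2 * j0 = 2 * y.
Proof.
have [N] := ubnP (size tr); elim: N tr j0 => // N IH tr j0 Hsz.
case: tr Hsz => [|x1 [|x2 tr2]] Hsz; try by [].
- by case=> _ <- <-; split => //; rewrite /= muln0.
- rewrite prog1_round //; case: ifP => // nx2.
  move/IH => [|-> Hs]; first by move: Hsz => /=; lia.
  by split => //; simpl; lia.
Qed.

Lemma prog01_past_round i j0 j tr : j0 <= j -> j < (prog01 i j0 tr).1 ->
  exists l, [/\ l < size tr, (prog01 i j0 (take l tr)).2 = Invoke (Read (R2 j))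
           & not_false (nth VBot tr l)].
Proof.
case: (eqVneq i 0) => [->|ni]; have [N] := ubnP (size tr); elim: N tr j0 => // N IH tr j0 Hsz le.
  case: tr Hsz => [|x1 [|x2 [|x3 [|x4 tr4]]]] Hsz; try by rewrite /= ltnNge le.
  rewrite prog0_round; case: ifP => nx4; last by rewrite /= ltnNge le.
  case: (eqVneq j0 j) => [<-|nj] Hr.
    by exists 3; split => //.
  have [||//|l [lt Ha Hn]] := IH tr4 j0.+1; [by move: Hsz => /=; lia | lia |].
  exists l.+4; split => //.
  by rewrite (_ : take l.+4 _ = [:: x1, x2, x3, x4 & take l tr4]) // prog0_round nx4.
case: tr Hsz => [|x1 [|x2 tr2]] Hsz.
- by rewrite /= ltnNge le.
- by rewrite /=; case: eqP ni => //= _ _; rewrite ltnNge le.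
rewrite prog1_round //; case: ifP => nx2; last by rewrite /= ltnNge le.
case: (eqVneq j0 j) => [<-|nj] Hr.
  by exists 1; split => //=; case: eqP ni.
have [||//|l [lt Ha Hn]] := IH tr2 j0.+1; [by move: Hsz => /=; lia | lia |].
exists l.+2; split => //.
by rewrite (_ : take l.+2 _ = [:: x1, x2 & take l tr2]) // prog1_round // nx2.
Qed.

Lemma prog2_round j0 u1 u2 c1 x t : prog2 j0 [:: u1, u2, c1, x & t] =
  if check u1 u2 c1 then prog2 j0.+1 t else (j0, Done).
Proof. by rewrite /=; case: check. Qed.

Lemma prog2_no_write j0 tr y v :
  (prog2 j0 tr).2 <> Invoke (Write (R1 y) v) /\ (prog2 j0 tr).2 <> Invoke (Write (C1 y) v).
Proof.
have [N] := ubnP (size tr); elim: N tr j0 => // N IH tr j0 Hsz.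
case: tr Hsz => [|x1 [|x2 [|x3 [|x4 tr4]]]] Hsz; try by rewrite //=; case: check.
rewrite prog2_round; case: ifP => // _; apply: IH; move: Hsz => /=; lia.
Qed.

Lemma prog2_writeR2 j0 tr r y w : prog2 j0 tr = (r, Invoke (Write (R2 y) w)) ->
  exists t3 u1 u2 c1, [/\ tr = t3 ++ [:: u1; u2; c1],
    (prog2 j0 t3).2 = Invoke (Read (R1 y)),
    (prog2 j0 (t3 ++ [:: u1])).2 = Invoke (Read (R1 y)),
    (prog2 j0 (t3 ++ [:: u1; u2])).2 = Invoke (Read (C1 y)) & check u1 u2 c1].
Proof.
have [N] := ubnP (size tr); elim: N tr j0 => // N IH tr j0 Hsz.
case: tr Hsz => [|x1 [|x2 [|x3 [|x4 tr4]]]] Hsz; try by [].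
  rewrite /=; case: ifP => // ch [_ <- _].
  by exists [::], x1, x2, x3.
rewrite prog2_round; case: ifP => // ch.
move/IH => [|t3 [u1 [u2 [c1 [Ht H1 H2 H3 Hc]]]]]; first by move: Hsz => /=; lia.
exists [:: x1, x2, x3, x4 & t3], u1, u2, c1; split => //; first by rewrite Ht.
- by rewrite prog2_round ch.
- by rewrite cat_cons !cat_cons prog2_round ch.
- by rewrite !cat_cons prog2_round ch.
Qed.

Lemma prog2_past_round j0 j tr : j0 <= j -> j < (prog2 j0 tr).1 ->
  exists l w, l < size tr /\ (prog2 j0 (take l tr)).2 = Invoke (Write (R2 j) w).
Proof.
have [N] := ubnP (size tr); elim: N tr j0 => // N IH tr j0 Hsz le.
case: tr Hsz => [|x1 [|x2 [|x3 [|x4 tr4]]]] Hsz; try by rewrite /= ltnNge le.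
  by rewrite /=; case: check => /=; rewrite ltnNge le.
rewrite prog2_round; case: ifP => ch; last by rewrite /= ltnNge le.
case: (eqVneq j0 j) => [<-|nj] Hr.
  by exists 3, (VBool true); split => //=; rewrite ch.
have [||//|l [w [lt Ha]]] := IH tr4 j0.+1; [by move: Hsz => /=; lia | lia |].
exists l.+4, w; split => //.
by rewrite (_ : take l.+4 _ = [:: x1, x2, x3, x4 & take l tr4]) // prog2_round ch.
Qed.

Lemma checkP u1 u2 c : check u1 u2 c -> exists x, [/\ u1 = VInt x, c = VInt x & u2 <> u1].
Proof.
case: u1 => // a; case: u2 => // b; case: c => // c /= /andP [/eqP -> /eqP ->].
by exists c; split => // -[]; lia.
Qed.

Lemma In_nth_index T (d x : T) s : List.In x s -> exists2 a, a < size s & nth d s a = x.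
Proof. by elim: s => [//|z s IH] /= [->|/IH [a lt H]]; [exists 0 | exists a.+1]. Qed.

Lemma In_pmap T U (f : T -> option U) s v : List.In v (pmap f s) ->
  exists2 x, List.In x s & f x = Some v.
Proof.
elim: s => [//|x s IH] /=; case Hx: (f x) => [w|] /=.
  by case=> [<-|/IH [y H1 H2]]; [exists x; first left | exists y; first right].
by case/IH => y H1 H2; exists y; first right.
Qed.

Lemma pmap_In T U (f : T -> option U) s x v : List.In x s -> f x = Some v ->
  List.In v (pmap f s).
Proof.
elim: s => [//|y s IH] /= [<- ->|Hin Hf]; first by left.
by case: (f y) => [w|] /=; [right|]; apply: IH.
Qed.

Lemma In_last T (d : T) s : s <> [::] -> List.In (last d s) s.
Proof. by elim: s d => [//|x [|y s] IH] d _ /=; [left | right; apply: IH]. Qed.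

Lemma last_prefix_head T (d u : T) s1 s2 s3 : u <> d -> u = last d s1 ->
  last d (s1 ++ s2) <> u -> size (s1 ++ s2 ++ s3) <= 2 -> u = head d (s1 ++ s2 ++ s3).
Proof.
move=> nd eu; rewrite eu; case: s1 eu => [/= eu|x [//|x' s1]] _ /=; first by case: nd.
by case: s2 => [|y s2]; rewrite ?cats0 // !size_cat /=; lia.
Qed.

Definition write_val (E : seq event) (y : reg) (i : nat) : option value :=
  match inv_at E i with
  | Some (_, Write x v) => if reg_eqb y x then Some v else None
  | _ => None
  end.

Definition write_of E y (s : nat * value) := write_val E y s.1.

Definition first_write E y S := head VBot (pmap (write_of E y) S).

Lemma reg_eqbP x y : reg_eqb x y -> x = y.
Proof. by case: x; case: y => //= a b /eqP ->. Qed.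

Lemma write_valP E y i v : write_val E y i = Some v -> exists q, inv_at E i = Some (q, Write y v).
Proof.
rewrite /write_val; case: (inv_at E i) => [[q [x|x w]]|] //.
by case Hr: (reg_eqb y x) => // -[<-]; exists q; rewrite (reg_eqbP Hr).
Qed.

Lemma pmap_write_of_cat E s y S : (forall i r, List.In (i, r) S -> i < size E) ->
  pmap (write_of (E ++ s) y) S = pmap (write_of E y) S.
Proof.
elim: S => [//|[i r] S IH] H /=.
rewrite IH => [|i' r' Hin]; last by apply: (H i' r'); right.
by rewrite /write_of /write_val /= inv_at_cat //; apply: (H i r); left.
Qed.

Lemma resp_of_gt E i k v : resp_of E i = Some (k, v) -> i < k.
Proof.
rewrite /resp_of; case: inv_at => [[p o]|] //.
by case: onth => [[q o'|q v'|q b]|] // [<- _]; rewrite addSn ltnS leq_addr.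
Qed.

Lemma legal_read E mem S a i r p y : legal_from E mem S -> a < size S ->
  nth (0, VBot) S a = (i, r) -> inv_at E i = Some (p, Read y) ->
  r = last (mem y) (pmap (write_of E y) (take a S)).
Proof.
elim: S mem a => [//|[i0 r0] S IH] mem a /=.
case Hi0 : (inv_at E i0) => [[p0 [x|x v]]|] // [H1 H2].
- case: a => [_ [<- <-]|a lt Hn Hi]; first by rewrite Hi0 => -[_ <-].
  by rewrite (IH _ _ H2 lt Hn Hi) /write_of /= /write_val Hi0.
- case: a => [_ [<- <-]|a lt Hn Hi]; first by rewrite Hi0.
  rewrite (IH _ _ H2 lt Hn Hi) /write_of /= /write_val Hi0 /upd.
  by case: (reg_eqb y x).
Qed.

Section Linearization.

Variables (x : reg) (E : seq event) (S : seq (nat * value)).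
Hypothesis linS : linearization_on x E S.

Lemma lin_mem i p o k v : inv_at E i = Some (p, o) -> op_reg o = x ->
  resp_of E i = Some (k, v) -> exists2 a, a < size S & nth (0, VBot) S a = (i, v).
Proof. by case: linS => _ _ H3 _ _ Hi Ho Hr; apply/In_nth_index/(H3 _ _ _ _ _ Hi Ho Hr). Qed.

Lemma lin_real_time a1 a2 i1 u1 i2 u2 r1 w : a1 < size S -> a2 < size S ->
  nth (0, VBot) S a1 = (i1, u1) -> nth (0, VBot) S a2 = (i2, u2) ->
  resp_of E i1 = Some (r1, w) -> r1 < i2 -> a1 < a2.
Proof.
case: linS => _ _ _ Hrt _ l1 l2 H1 H2 Hr ri; have ir := resp_of_gt Hr.
case: (ltngtP a1 a2) => // [lt|eq].
  by exfalso; apply: (Hrt a2 a1 lt l1); exists r1, w; rewrite H1 H2.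
by move: H1; rewrite eq H2 => -[e _]; move: ir ri; rewrite e; lia.
Qed.

Lemma lin_read_written i p k r : inv_at E i = Some (p, Read x) -> resp_of E i = Some (k, r) ->
  r <> init x -> exists q i', inv_at E i' = Some (q, Write x r).
Proof.
move=> HI HR ne; have [a alt Ha] := lin_mem HI erefl HR.
case: linS => _ _ _ _ /legal_read /(_ alt Ha HI); set W := pmap _ _ => Hr.
have WN : W <> [::] by move=> W0; apply: ne; rewrite Hr W0.
have [s _] := In_pmap (In_last (init x) WN); rewrite -Hr.
by case/write_valP => q Hq; exists q, s.1.
Qed.

End Linearization.

Lemma prog01E p tr : p < 2 -> prog p tr = prog01 p 0 tr.
Proof. by rewrite /prog => ->. Qed.

Lemma prog2E p tr : 2 <= p -> prog p tr = prog2 0 tr.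
Proof. by move=> H; rewrite /prog ltnNge H. Qed.

Lemma pair_eta (x : nat * action) a : x.2 = a -> x = (x.1, a).
Proof. by case: x => ? ? /= ->. Qed.

Lemma pending_none_ltrace q o s :
  foldl (upd_pending q) (Some o) s = None -> ltrace q s <> [::].
Proof.
elim: s o => [//|e s IH] o /=; rewrite /ltrace /=.
case He: (ev_result q e) => [v|] //.
by case: e He => [q' o'|q' v|q' b] /=; case: eqP => // _ _; apply: IH.
Qed.

Definition round_flip (j : nat) (E : seq event) (i : nat) : bool :=
  (if nth ev0 E i is EFlip 0 _ then true else false) &&
  (if prog 0 (ltrace 0 (take i E)) is (j', Flip) then j' == j else false).

Lemma round_flip_prog j E i : round_flip j E i -> prog 0 (ltrace 0 (take i E)) = (j, Flip).
Proof. by case/andP => _; case: prog => j' [o| |] // /eqP ->. Qed.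

Lemma round_flip_unique E y r r' : round_flip y E r -> round_flip y E r' ->
  r < size E -> r' < size E -> r = r'.
Proof.
have key a a' : round_flip y E a -> round_flip y E a' -> a < size E -> a < a' -> False.
  move=> Ha /round_flip_prog Hj' aE lt; move: Ha (round_flip_prog Ha) => /andP [Ha _].
  rewrite !prog01E // in Hj' * => Hj.
  have [s1 _] := prog0_flip Hj; have [s2 _] := prog0_flip Hj'.
  have := size_ltrace_take 0 E lt.
  rewrite (take_nth ev0 aE) ltrace_rcons; case: (nth ev0 E a) Ha => // -[|//] b _ /=.
  by rewrite size_cat /=; lia.
move=> H1 H2 l1 l2; case: (ltngtP r r') => // lt; exfalso.
  exact: key H1 H2 l1 lt.
exact: key H2 H1 l2 lt.
Qed.

Section ValidWeakener.

Variables (n : nat) (A : strategy) (E : seq event).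
Hypothesis VE : valid n A E.

Lemma ltrace_inv_lt i i' q o o' : inv_at E i = Some (q, o) -> inv_at E i' = Some (q, o') ->
  i < i' -> size (ltrace q (take i E)) < size (ltrace q (take i' E)).
Proof.
move=> H H' lt.
have [_ Hp _] := valid_inv VE H; have [_ Hp' _] := valid_inv VE H'.
have Hs : take i.+1 E = rcons (take i E) (EInv q o).
  by rewrite (take_nth ev0 (inv_at_size H)) (inv_at_nth H).
have Hsplit : take i' E = take i.+1 E ++ drop i.+1 (take i' E).
  by rewrite -{1}(cat_take_drop i.+1 (take i' E)) take_takel.
move: Hp'; rewrite Hsplit /pending foldl_cat -/(pending q _) Hs pending_rcons Hp /= eqxx.
move/pending_none_ltrace; rewrite Hsplit ltrace_cat size_cat Hs ltrace_rcons /= cats0.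
by case: (ltrace q _) => //= *; lia.
Qed.

Lemma writeR1_inv i q y v : inv_at E i = Some (q, Write (R1 y) v) ->
  [/\ q = 0, v = VInt 0 & size (ltrace 0 (take i E)) = 4 * y] \/
  [/\ q = 1, v = VInt 1 & size (ltrace 1 (take i E)) = 2 * y].
Proof.
move=> H; have [_ _] := valid_inv VE H.
case: (ltnP q 2) => [lt|ge]; last by rewrite prog2E // => /(proj1 (prog2_no_write _ _ _ _)).
rewrite prog01E // => /pair_eta; case: q lt H => [|[|]] // _ H.
  by case/prog0_writeR1 => -> Hs; left; split => //; lia.
by case/prog1_writeR1 => -> Hs; right; split => //; lia.
Qed.

Lemma writeR1_unique i i' q y v v' : inv_at E i = Some (q, Write (R1 y) v) ->
  inv_at E i' = Some (q, Write (R1 y) v') -> i = i'.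
Proof.
move=> H H'.
have S : size (ltrace q (take i E)) = size (ltrace q (take i' E)).
  case: (writeR1_inv H) => -[e1 _ s1]; case: (writeR1_inv H') => -[e2 _ s2];
  by subst; rewrite ?s1 ?s2.
case: (ltngtP i i') => // lt.
  by have := ltrace_inv_lt H H' lt; rewrite S ltnn.
by have := ltrace_inv_lt H' H lt; rewrite S ltnn.
Qed.

Lemma writesR1_val S y v : List.In v (pmap (write_of E (R1 y)) S) -> v = VInt 0 \/ v = VInt 1.
Proof.
move=> Hv; have [s _ /write_valP [q /writeR1_inv]] := In_pmap Hv.
by case=> -[_ -> _]; [left | right].
Qed.

(* Only p_0 and p_1 write R_1[y], each at most once. *)
Lemma size_writesR1 S y : uniq (map fst S) -> size (pmap (write_of E (R1 y)) S) <= 2.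
Proof.
move=> U; have -> : pmap (write_of E (R1 y)) S = pmap (write_val E (R1 y)) (map fst S).
  by elim: S {U} => [//|s S IH] /=; rewrite /pmap /= -!/(pmap _ _) IH.
rewrite size_pmap -size_filter; set J := filter _ _.
have HJ i : i \in J -> exists q v, inv_at E i = Some (q, Write (R1 y) v).
  rewrite mem_filter => /andP [/= Hw _].
  by case Hs: (write_val E (R1 y) i) Hw => [v|] // _; have [q Hq] := write_valP Hs; exists q, v.
pose proc i := if inv_at E i is Some (q, _) then q else 0.
rewrite -(size_map proc); apply: (@uniq_leq_size _ _ [:: 0; 1]).
  rewrite map_inj_in_uniq ?filter_uniq // => i i' Hi Hi'.
  have [q [v Hq]] := HJ i Hi; have [q' [v' Hq']] := HJ i' Hi'.
  by rewrite /proc Hq Hq' => eq; subst q'; apply: writeR1_unique Hq Hq'.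
move=> x /mapP [i Hi ->]; have [q [v Hq]] := HJ i Hi.
by rewrite /proc Hq; case: (writeR1_inv Hq) => -[-> _].
Qed.

Lemma writeC1_flip i q y w : inv_at E i = Some (q, Write (C1 y) w) ->
  exists r b, [/\ r < i, nth ev0 E r = EFlip 0 b, round_flip y E r & w = VInt (Posz b)].
Proof.
move=> H; have [_ _] := valid_inv VE H; have iE := inv_at_size H.
case: (ltnP q 2) => [lt|ge]; last by rewrite prog2E // => /(proj2 (prog2_no_write _ _ _ _)).
rewrite prog01E // => /pair_eta; case: q lt H => [|[|]] // _ H; last by move/prog1_no_writeC1.
case/prog0_writeC1 => tr [Htr Hf].
have [||r [b [rlt Hr Hv Hlt]]] := ltrace_flip (p := 0) (l := size tr) (valid_take (i := i) VE).
- by rewrite Htr size_rcons.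
- by rewrite Htr -cats1 take_size_cat // prog01E // Hf.
rewrite size_take iE in rlt.
move: Hr Hv Hlt; rewrite nth_take // take_takel ?(ltnW rlt) // Htr nth_rcons ltnn eqxx.
rewrite -cats1 take_size_cat // => Hr Hv Hlt.
by exists r, b; split => //; rewrite /round_flip Hr Hlt prog01E // Hf /=.
Qed.

Lemma round_flip_writeR1 y : prog 0 (ltrace 0 E) = (y, Flip) ->
  exists i r v, inv_at E i = Some (0, Write (R1 y) (VInt 0)) /\ resp_of E i = Some (r, v).
Proof.
rewrite prog01E // => /prog0_flip [_ [tr [x [Ht Hp]]]].
have [||i [r [_ _ HI HR _]]] :=
  ltrace_op_rcons (p := 0) (T := tr) (v := x) (o := Write (R1 y) (VInt 0)) VE.
- by rewrite Ht -(size_rcons tr x) take_size.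
- by rewrite prog01E // Hp.
by exists i, r, x.
Qed.

(* Two reads of R_1[y] that are ordered in real time and return different values
   sandwich a write; as there are at most two writes, the first read returns the
   first write of the linearization. *)
Lemma reads_first_writeR1 y S i1 i2 p1 p2 r1 r2 u1 u2 :
  linearization_on (R1 y) E S ->
  inv_at E i1 = Some (p1, Read (R1 y)) -> resp_of E i1 = Some (r1, u1) ->
  inv_at E i2 = Some (p2, Read (R1 y)) -> resp_of E i2 = Some (r2, u2) ->
  r1 < i2 -> u1 <> VBot -> u2 <> u1 -> u1 = first_write E (R1 y) S.
Proof.
move=> L HI1 HR1 HI2 HR2 r1i2 u1B u21.
have [a1 a1lt Ha1] := lin_mem L HI1 erefl HR1.
have [a2 a2lt Ha2] := lin_mem L HI2 erefl HR2.
have a12 := lin_real_time L a1lt a2lt Ha1 Ha2 HR1 r1i2.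
case: L => U _ _ _ Leg.
have Lu1 := legal_read Leg a1lt Ha1 HI1; have Lu2 := legal_read Leg a2lt Ha2 HI2.
have e2 : take a2 S = take a1 S ++ take (a2 - a1) (drop a1 S).
  by rewrite -takeD subnKC // ltnW.
rewrite /first_write -(cat_take_drop a2 S) e2 -catA !pmap_cat.
apply: last_prefix_head => //.
- by rewrite -pmap_cat -e2 /= -Lu2.
- by rewrite -!pmap_cat catA -e2 cat_take_drop; apply: size_writesR1.
Qed.

End ValidWeakener.

Definition toggle (m : nat) (s : seq bool) : seq bool :=
  mkseq (fun i => nth false s i (+) (i == m)) (size s).

Lemma size_toggle m s : size (toggle m s) = size s.
Proof. exact: size_mkseq. Qed.

Lemma nth_toggle m s i :
  nth false (toggle m s) i = nth false s i (+) ((i == m) && (i < size s)).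
Proof.
rewrite /toggle; case: (ltnP i (size s)) => h; first by rewrite nth_mkseq // andbT.
by rewrite !nth_default ?size_mkseq // andbF.
Qed.

Lemma toggleK m : involutive (toggle m).
Proof.
move=> s; apply: (@eq_from_nth _ false); first by rewrite !size_toggle.
by move=> i _; rewrite !nth_toggle size_toggle addbK.
Qed.

Section ToggleCoin.

Variables (n : nat) (A : strategy).

Lemma run_toggle_flip cs k r p b : size cs = k -> r < size (run n A cs k) ->
  nth ev0 (run n A cs k) r = EFlip p b ->
  let H' := run n A (toggle (count is_flip (take r (run n A cs k))) cs) k in
  [/\ take r H' = take r (run n A cs k), r < size H' & nth ev0 H' r = EFlip p (~~ b)].
Proof.
move=> szk rH Hr; set H := run n A cs k; set E0 := take r H; set m := count is_flip E0.
have sE0 : size E0 = r by rewrite size_takel // ltnW.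
have [t0 t0k Ht0] := take_run (ltnW rH); rewrite -/H -/E0 in Ht0.
have t0lt : t0 < k.
  rewrite ltn_neqAle t0k andbT; apply/negP => /eqP e.
  by move: (congr1 size Ht0); rewrite e sE0 => ez; rewrite -/H ez ltnn in rH.
have mk : m < k.
  apply: leq_ltn_trans (count_size _ _) _.
  by rewrite sE0; apply: leq_trans rH (size_run _ _ _ _).
have Vc0 := @run_consistent n A cs k r rH; rewrite -/E0 -/m Hr in Vc0.
have [_ _ _ bm] := next_event_spec Vc0.
have flip_any b' : next_event n A E0 b' = Some (EFlip p b').
  case: (next_event_coin n A E0) => [Hb|[p' Hp]].
    by have := Vc0; rewrite (Hb _ b') => /[dup] /next_event_spec [_ _ _ <-].
  by move: Vc0; rewrite !Hp => -[->].
have R0 : run n A (toggle m cs) t0 = E0.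
  rewrite -Ht0; symmetry; apply: run_eq_coins => i; rewrite Ht0 => lt.
  by rewrite nth_toggle (ltn_eqF lt) addbF.
have [s2 ->] := @run_prefix n A (toggle m cs) _ _ t0lt.
rewrite runS /= R0 flip_any nth_toggle eqxx szk mk addbT -bm -cats1 -catA.
by rewrite take_size_cat // size_cat nth_cat sE0 ltnn subnn /= addnS ltnS leq_addr.
Qed.

End ToggleCoin.

Definition round_flip_pos j (H : seq event) := find (round_flip j H) (iota 0 (size H)).

Lemma round_flip_posE j H r : round_flip j H r -> r < size H -> round_flip_pos j H = r.
Proof.
move=> Pr rH.
have hs : has (round_flip j H) (iota 0 (size H)) by apply/hasP; exists r; rewrite ?mem_iota.
have flt : round_flip_pos j H < size H by rewrite -[X in _ < X](size_iota 0) -has_find.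
have := nth_find 0 hs; rewrite nth_iota // add0n => Pf.
exact: round_flip_unique Pf Pr flt rH.
Qed.

Definition toggle_round_coin n A j k (cs : seq bool) : seq bool :=
  let H := run n A cs k in
  let r := round_flip_pos j H in
  if r < size H then toggle (count is_flip (take r H)) cs else cs.

Lemma toggle_round_coin_tupleP n A j k (cs : k.-tuple bool) :
  size (toggle_round_coin n A j k cs) == k.
Proof. by rewrite /toggle_round_coin /=; case: ifP; rewrite ?size_toggle size_tuple. Qed.

Section RoundCoin.

Variables (n : nat) (A : strategy) (j : nat) (fR1 fC1 fR2 : seq event -> seq (nat * value)).
Hypothesis linR1 : forall E, is_exec n A E -> linearization_on (R1 j) E (fR1 E).
Hypothesis prefR1 : forall G H, is_exec n A G -> is_exec n A H ->
  (exists s, H = G ++ s) -> exists s', fR1 H = fR1 G ++ s'.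
Hypothesis linC1 : forall E, is_exec n A E -> linearization_on (C1 j) E (fC1 E).
Hypothesis linR2 : forall E, is_exec n A E -> linearization_on (R2 j) E (fR2 E).

Section Execution.

Variable H : seq event.
Hypothesis execH : is_exec n A H.
Let VH := exec_valid execH.

(* p_0 and p_1 leave round j only after reading true from R_2[j], which only
   the processes p_i, i >= 2, write. *)
Lemma entered_writeR2 : entered n H j.+1 ->
  exists q l w, [/\ 2 <= q, l <= size (ltrace q H)
                  & (prog2 0 (take l (ltrace q H))).2 = Invoke (Write (R2 j) w)].
Proof.
case/existsP => p Hp; case: (ltnP p 2) => [p2|p2]; last first.
  have [|l [w [llt Hl]]] := prog2_past_round (leq0n j) (tr := ltrace p H).
    by rewrite -(prog2E _ p2).
  by exists p, l, w; split => //; apply: ltnW.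
move: Hp; rewrite prog01E // => /(prog01_past_round (leq0n j)) [l [llt Ha Hnf]].
have [|i [r [_ _ HI HR _]]] := ltrace_op (o := Read (R2 j)) VH llt; first by rewrite prog01E.
have [|q [i' HIq]] := lin_read_written (linR2 execH) HI HR; first by move=> E; rewrite E in Hnf.
have [_ _ Haq] := valid_inv VH HIq.
case: (ltnP q 2) => [q2|q2].
  by move: Haq; rewrite prog01E // => /pair_eta /prog01_no_writeR2.
exists q, (size (ltrace q (take i' H))), (nth VBot (ltrace p H) l); split => //.
  by rewrite -{2}(cat_take_drop i' H) ltrace_cat size_cat leq_addr.
by rewrite -ltrace_take -(prog2E _ q2).
Qed.

Lemma writer_reads_first_writeR1 q l w : 2 <= q -> l <= size (ltrace q H) ->
  (prog2 0 (take l (ltrace q H))).2 = Invoke (Write (R2 j) w) ->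
  exists i r c, [/\ inv_at H i = Some (q, Read (C1 j)), resp_of H i = Some (r, c),
                    c = first_write H (R1 j) (fR1 H) & c = VInt 0 \/ c = VInt 1].
Proof.
move=> q2 lle /pair_eta /prog2_writeR2 [t3 [u1 [u2 [c [Ht Ha1 Ha2 Ha3 Hc]]]]].
have Tpre m : m <= 3 -> take (size t3 + m) (ltrace q H) = t3 ++ take m [:: u1; u2; c].
  move=> le; have -> : t3 ++ take m [:: u1; u2; c] = take (size t3 + m) (take l (ltrace q H)).
    by rewrite Ht takeD take_size_cat // drop_size_cat.
  rewrite take_takel //.
  have : size (take l (ltrace q H)) = size t3 + 3 by rewrite Ht size_cat.
  by rewrite size_takel // => ->; lia.
have [||i1 [r1 [_ _ HI1 HR1 [Hi1 Hr1]]]] :=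
  ltrace_op_rcons (p := q) (T := t3) (v := u1) (o := Read (R1 j)) VH.
- by rewrite -addn1 Tpre ?cats1.
- by rewrite prog2E.
have [||i2 [r2 [_ _ HI2 HR2 [Hi2 _]]]] :=
  ltrace_op_rcons (p := q) (T := t3 ++ [:: u1]) (v := u2) (o := Read (R1 j)) VH.
- by rewrite size_cat -addn1 -addnA Tpre -?cats1 -?catA.
- by rewrite prog2E.
have [||i3 [r3 [_ _ HI3 HR3 _]]] :=
  ltrace_op_rcons (p := q) (T := t3 ++ [:: u1; u2]) (v := c) (o := Read (C1 j)) VH.
- by rewrite size_cat -addn1 -addnA Tpre -?cats1 -?catA.
- by rewrite prog2E.
have r1i2 : r1 < i2.
  rewrite ltnNge; apply/negP => /(size_ltrace_take q H).
  by rewrite Hi2 Hr1 size_cat /= addn1 ltnn.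
have [x [Eu1 Ec Nu2]] := checkP Hc.
have u1B : u1 <> VBot by rewrite Eu1.
have Hu1 := reads_first_writeR1 VH (linR1 execH) HI1 HR1 HI2 HR2 r1i2 u1B Nu2.
exists i3, r3, c; split => //; first by rewrite Ec -Eu1.
apply: (writesR1_val VH (S := fR1 H) (y := j)); rewrite Ec -Eu1 Hu1 /first_write.
by case E: pmap => [|w0 W] /=; [move: Hu1; rewrite /first_write E Eu1 | left].
Qed.

Lemma readC1_round_flip i p r c : inv_at H i = Some (p, Read (C1 j)) ->
  resp_of H i = Some (r, c) -> c = VInt 0 \/ c = VInt 1 ->
  exists r' b, [/\ r' < size H, round_flip j H r', nth ev0 H r' = EFlip 0 b & c = VInt b].
Proof.
move=> HI HR c01; have [|q [i' HIq]] := lin_read_written (linC1 execH) HI HR.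
  by case: c01 => -> [].
have [r' [b [ri' Hr HP ->]]] := writeC1_flip VH HIq.
by exists r', b; split => //; apply: ltn_trans ri' (inv_at_size HIq).
Qed.

(* p_0 completes its write to R_1[j] before flipping its round-j coin, and the
   linearization of R_1[j] only grows; so the first write is fixed before the coin
   is flipped. *)
Lemma first_writeR1_before_flip r : round_flip j H r -> r < size H ->
  first_write H (R1 j) (fR1 H) = first_write (take r H) (R1 j) (fR1 (take r H)).
Proof.
move=> /round_flip_prog Hflip rH; set E0 := take r H.
have execE0 : is_exec n A E0 := exec_take r execH.
have [i0 [r0 [v0 [HI0 HR0]]]] := round_flip_writeR1 (valid_take VH) Hflip.
have [_ lin_ops lin_resp _ _] := linR1 execE0.
have NE0 : pmap (write_of E0 (R1 j)) (fR1 E0) <> [::].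
  have : List.In (VInt 0) (pmap (write_of E0 (R1 j)) (fR1 E0)).
    apply: pmap_In (lin_resp _ _ _ _ _ HI0 erefl HR0) _.
    by rewrite /write_of /write_val /= HI0 /= eqxx.
  by case: pmap.
have [s' ->] : exists s', fR1 H = fR1 E0 ++ s'.
  by apply: prefR1 => //; exists (drop r H); rewrite cat_take_drop.
have sz i v : List.In (i, v) (fR1 E0) -> i < size E0.
  by case/lin_ops => p' [o' [Hi _]]; apply: inv_at_size Hi.
rewrite /first_write pmap_cat -{1}(cat_take_drop r H) -/E0 pmap_write_of_cat //.
by case: pmap NE0.
Qed.

Lemma entered_round_coin : entered n H j.+1 ->
  exists r b, [/\ r < size H, round_flip j H r, nth ev0 H r = EFlip 0 b
                & first_write (take r H) (R1 j) (fR1 (take r H)) = VInt b].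
Proof.
case/entered_writeR2 => q [l [w [q2 lle Hw]]].
have [i [r [c [HI HR Hc c01]]]] := writer_reads_first_writeR1 q2 lle Hw.
have [r' [b [rH Hr Hn Ec]]] := readC1_round_flip HI HR c01.
by exists r', b; split => //; rewrite -first_writeR1_before_flip // -Hc.
Qed.

End Execution.

Lemma toggle_round_coin_good cs k : size cs = k -> entered n (run n A cs k) j.+1 ->
  let cs' := toggle_round_coin n A j k cs in
  ~~ entered n (run n A cs' k) j.+1 /\ toggle_round_coin n A j k cs' = cs.
Proof.
move=> szk bad; set H := run n A cs k.
have execH : is_exec n A H by exists cs, k.
have [r [b [rH Pr Hr Hw]]] := entered_round_coin execH bad.
have -> : toggle_round_coin n A j k cs = toggle (count is_flip (take r H)) cs.
  by rewrite /toggle_round_coin /= -/H (round_flip_posE Pr rH) rH.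
have [Ht rH' Hr'] := run_toggle_flip szk rH Hr.
set H' := run n A _ k in Ht rH' Hr' *.
have execH' : is_exec n A H' by eexists _, k.
have Pr' : round_flip j H' r by move: Pr; rewrite /round_flip Ht Hr Hr'.
split.
  apply/negP => /(entered_round_coin execH') [r' [b' [rH'' Pr'' Hr'' Hw']]].
  rewrite (round_flip_unique Pr'' Pr' rH'' rH') Hr' in Hr'' Hw'.
  by case: Hr'' Hw' => <-; rewrite Ht Hw; case: (b).
by rewrite /toggle_round_coin /= -/H' (round_flip_posE Pr' rH') rH' Ht toggleK.
Qed.

End RoundCoin.

Lemma card_le_card_predC (T : finType) (P : pred T) (g : T -> T) :
  (forall x, P x -> ~~ P (g x) /\ g (g x) = x) -> #|P| <= #|predC P|.
Proof.
move=> Hg; have inj : {in P &, injective g}.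
  by move=> x y Hx Hy e; rewrite -(Hg x Hx).2 -(Hg y Hy).2 e.
rewrite -(card_in_imset inj); apply: subset_leq_card.
by apply/subsetP => y /imsetP [x Hx ->]; rewrite inE; apply: (Hg x Hx).1.
Qed.

Local Open Scope ring_scope.

Theorem lemma2 (n : nat) (A : strategy) :
  (3 <= n)%N -> registers_strongly_linearizable n A ->
  forall j k : nat, 1 / 2 <= prob_none_within n A j k.
Proof.
move=> _ SL j k.
have [fR1 [linR1 prefR1]] := SL (R1 j).
have [fC1 [linC1 _]] := SL (C1 j).
have [fR2 [linR2 _]] := SL (R2 j).
pose bad := [pred cs : k.-tuple bool | entered n (run n A cs k) j.+1].
pose g (cs : k.-tuple bool) := Tuple (toggle_round_coin_tupleP n A j cs).
have bad_le_good : (#|bad| <= #|predC bad|)%N.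
  apply: (@card_le_card_predC _ _ g) => cs /(toggle_round_coin_good linR1 prefR1 linC1 linR2).
  by case/(_ (size_tuple cs)) => good inv; split => //; apply: val_inj.
have halves : (2 ^ k <= 2 * #|predC bad|)%N.
  have := cardC bad; rewrite card_tuple card_bool => <-.
  by rewrite mul2n -addnn leq_add2r.
rewrite /prob_none_within (eq_card (B := predC bad)) //.
rewrite ler_pdivlMr ?ltr0n ?expn_gt0 //.
move: halves; rewrite -(ler_nat rat) natrM; lra.
Qed.
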